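(* Let $F$ be an ordered field, let $\mathcal{U}$ be a free ultrafilter on $\mathbb{N}$, and let ${}^\ast F=F^{\mathbb{N}}/\mathcal{U}$ be the ultrapower. Let $\langle u_n\rangle_{n\in\mathbb{N}}$ be a sequence in $F$ and let $u\in{}^\ast F$ be its equivalence class. Consider the partition $\mathbb{N}=A\sqcup B\sqcup C$ where $A=\{n\in\mathbb{N}: u_n<u\}$, $B=\{n\in\mathbb{N}: u_n=u\}$, $C=\{n\in\mathbb{N}: u_n>u\}$ (here $u_n\in F$ is regarded as an element of ${}^\ast F$). Then exactly one of the following three possibilities occurs: (1) $B\in\mathcal{U}$, and then $\langle u_n\rangle$ contains an infinite constant subsequence; (2) $A\in\mathcal{U}$, and then $\langle u_n\rangle$ contains an infinite strictly increasing subsequence; (3) $C\in\mathcal{U}$, and then $\langle u_n\rangle$ contains an infinite strictly decreasing subsequence.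
   Context: A free ultrafilter $\mathcal{U}$ on $\mathbb{N}$ is an ultrafilter on $\mathbb{N}$ containing every cofinite subset of $\mathbb{N}$. The ultrapower ${}^\ast F=F^{\mathbb{N}}/\mathcal{U}$ is the set of equivalence classes $[\langle v_n\rangle]$ of sequences in $F$, where two sequences are equivalent iff $\{n: v_n=w_n\}\in\mathcal{U}$. It is ordered by $[\langle v_n\rangle]<[\langle w_n\rangle]$ iff $\{n\in\mathbb{N}: v_n<w_n\}\in\mathcal{U}$. Each $x\in F$ is identified with the class $[\langle x\rangle]$ of the constant sequence with value $x$; thus for $x\in F$, $x<[\langle w_n\rangle]$ iff $\{n: x<w_n\}\in\mathcal{U}$, and similarly for $=$ and $>$. *)

(* An ordered field is a [realFieldType] (a totally ordered field). *)
From mathcomp Require Import all_boot all_order all_algebra.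
Set Implicit Arguments. Unset Strict Implicit. Unset Printing Implicit Defensive.
Import Order.TTheory GRing.Theory Num.Theory.
Local Open Scope ring_scope.

Definition cofinite (X : nat -> Prop) : Prop :=
  exists N : nat, forall n : nat, (N <= n)%N -> X n.

Definition is_ultrafilter (U : (nat -> Prop) -> Prop) : Prop :=
  [/\ U (fun _ => True),
      ~ U (fun _ => False),
      (forall X Y : nat -> Prop, U X -> (forall n, X n -> Y n) -> U Y),
      (forall X Y : nat -> Prop, U X -> U Y -> U (fun n => X n /\ Y n)) &
      (forall X : nat -> Prop, U X \/ U (fun n => ~ X n))].

Definition is_free_ultrafilter (U : (nat -> Prop) -> Prop) : Prop :=
  is_ultrafilter U /\ (forall X : nat -> Prop, cofinite X -> U X).

(* The ultrapower *F = F^N / U. Elements are represented by sequences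
   (representatives of their classes); the order and equality of classes
   are given by the U-largeness of the corresponding index sets, which does
   not depend on the chosen representatives. *)
Definition ult_lt (F : realFieldType) (U : (nat -> Prop) -> Prop)
  (v w : nat -> F) : Prop := U (fun n => v n < w n).
Definition ult_eq (F : realFieldType) (U : (nat -> Prop) -> Prop)
  (v w : nat -> F) : Prop := U (fun n => v n = w n).

Definition ult_const (F : realFieldType) (x : F) : nat -> F := fun _ => x.

Definition strictly_incr_idx (phi : nat -> nat) : Prop :=
  forall i j : nat, (i < j)%N -> (phi i < phi j)%N.

Definition has_const_subseq (F : realFieldType) (u : nat -> F) : Prop :=
  exists phi : nat -> nat, strictly_incr_idx phi /\
    forall i j : nat, u (phi i) = u (phi j).

Definition has_incr_subseq (F : realFieldType) (u : nat -> F) : Prop :=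
  exists phi : nat -> nat, strictly_incr_idx phi /\
    forall i j : nat, (i < j)%N -> u (phi i) < u (phi j).

Definition has_decr_subseq (F : realFieldType) (u : nat -> F) : Prop :=
  exists phi : nat -> nat, strictly_incr_idx phi /\
    forall i j : nat, (i < j)%N -> u (phi j) < u (phi i).

From mathcomp Require Import all_boot all_order all_algebra.
From Stdlib Require Import Classical ClassicalEpsilon.
Import Order.TTheory GRing.Theory Num.Theory.
Set Implicit Arguments. Unset Strict Implicit.
Local Open Scope ring_scope.

(* For each n, trichotomy in F makes exactly one of the index sets
   {m | u n < u m}, {m | u n = u m}, {m | u m < u n} large, so A, B, C
   partition N and exactly one of them is large.  If, say, A is large, then
   for every n in A the large set A ∩ {m | u n < u m} is unbounded, since U is
   free; iterating a choice of such an m > n yields indices n_0 < n_1 < ...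
   in A along which u increases strictly. *)

Definition exactly_one3 (P Q R : Prop) : Prop :=
  (P /\ ~ Q /\ ~ R) \/ (Q /\ ~ P /\ ~ R) \/ (R /\ ~ P /\ ~ Q).

Section Ultrafilter.
Variable U : (nat -> Prop) -> Prop.
Hypothesis hU : is_ultrafilter U.

Lemma ultraF_mono X Y : U X -> (forall n, X n -> Y n) -> U Y.
Proof. by case: hU => _ _ + _ _; apply. Qed.

Lemma ultraF_meet X Y : U X -> U Y -> U (fun n => X n /\ Y n).
Proof. by case: hU => _ _ _ + _; apply. Qed.

Lemma ultraF_disjoint X Y : U X -> (forall n, X n -> Y n -> False) -> ~ U Y.
Proof.
move=> UX XY UY; case: hU => _ nU0 _ _ _; apply: nU0.
by apply: ultraF_mono (ultraF_meet UX UY) _ => n [/XY].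
Qed.

Lemma ultraF_cover3 X Y Z :
  (forall n, X n \/ Y n \/ Z n) -> U X \/ U Y \/ U Z.
Proof.
move=> XYZ; case: hU => _ _ _ _ compl.
case: (compl X) => [|nX]; first by left.
case: (compl Y) => [|nY]; first by right; left.
right; right; apply: ultraF_mono (ultraF_meet nX nY) _ => n [Xn Yn].
by case: (XYZ n) => [|[]].
Qed.

Lemma ultraF_exactly_one3 X Y Z :
  (forall n, exactly_one3 (X n) (Y n) (Z n)) -> exactly_one3 (U X) (U Y) (U Z).
Proof.
rewrite /exactly_one3 => one.
have cover : U X \/ U Y \/ U Z by apply: ultraF_cover3 => n; move: (one n); tauto.
have dXY : U X -> ~ U Y.
  by move=> UX; apply: ultraF_disjoint UX _ => n; move: (one n); tauto.
have dXZ : U X -> ~ U Z.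
  by move=> UX; apply: ultraF_disjoint UX _ => n; move: (one n); tauto.
have dYZ : U Y -> ~ U Z.
  by move=> UY; apply: ultraF_disjoint UY _ => n; move: (one n); tauto.
tauto.
Qed.

Lemma ultraF_nonempty X : U X -> exists n, X n.
Proof.
move=> UX; apply: NNPP => noX; case: hU => _ nU0 _ _ _; apply: nU0.
by apply: ultraF_mono UX _ => n Xn; apply: noX; exists n.
Qed.

End Ultrafilter.

Lemma free_ultraF_unbounded U X :
  is_free_ultrafilter U -> U X -> forall N, exists m, (N <= m)%N /\ X m.
Proof.
case=> hU cofin UX N; apply: (ultraF_nonempty hU).
have UgeN : U (fun n => (N <= n)%N) by apply: cofin; exists N.
exact: (ultraF_meet hU UgeN UX).
Qed.

Lemma lt_eq_gt_exactly_one3 d (T : orderType d) (x y : T) :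
  exactly_one3 (x < y)%O (x = y) (y < x)%O.
Proof.
rewrite /exactly_one3; case: ltgtP => [xy|yx|->]; last by right; left.
- by left; split=> //; split=> // xy_eq; rewrite xy_eq ltxx in xy.
- by right; right; split=> //; split=> // xy_eq; rewrite xy_eq ltxx in yx.
Qed.

Lemma exists_chain_idx (P : nat -> Prop) (R : nat -> nat -> Prop) n0 :
  (forall b a c, R a b -> R b c -> R a c) -> P n0 ->
  (forall n, P n -> exists m, [/\ (n < m)%N, P m & R n m]) ->
  exists phi, strictly_incr_idx phi /\ forall i j, (i < j)%N -> R (phi i) (phi j).
Proof.
move=> R_trans Pn0 next.
have step (s : {n | P n}) : exists t : {n | P n}, (sval s < sval t)%N /\ R (sval s) (sval t).
  case: s => n Pn; have [m [nm Pm Rnm]] := next n Pn.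
  by exists (exist _ m Pm); split.
pose f s := sval (constructive_indefinite_description _ (step s)).
have f_spec s : (sval s < sval (f s))%N /\ R (sval s) (sval (f s)).
  exact: svalP (constructive_indefinite_description _ (step s)).
pose phi k := sval (iter k f (exist _ n0 Pn0)).
exists phi; split.
- by apply: (homo_ltn ltn_trans) => k; exact: (f_spec _).1.
- by apply: homo_ltn R_trans _ => k; exact: (f_spec _).2.
Qed.

Lemma free_ultraF_chain_subseq U (T : Type) (r : T -> T -> Prop) (u : nat -> T) :
  is_free_ultrafilter U -> (forall y x z, r x y -> r y z -> r x z) ->
  U (fun n => U (fun m => r (u n) (u m))) ->
  exists phi, strictly_incr_idx phi /\
    forall i j, (i < j)%N -> r (u (phi i)) (u (phi j)).
Proof.
move=> hU r_trans UP; have [n0 Pn0] := ultraF_nonempty hU.1 UP.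
apply: (@exists_chain_idx (fun n => U (fun m => r (u n) (u m)))
                          (fun a b => r (u a) (u b)) n0) => // [b a c|n Pn].
  exact: r_trans.
have [m [nm [Pm rnm]]] := free_ultraF_unbounded hU (ultraF_meet hU.1 UP Pn) n.+1.
by exists m.
Qed.

Theorem theorem3p2 (F : realFieldType) (U : (nat -> Prop) -> Prop)
  (hU : is_free_ultrafilter U) (u : nat -> F) :
  let A := fun n : nat => ult_lt U (ult_const (u n)) u in
  let B := fun n : nat => ult_eq U (ult_const (u n)) u in
  let C := fun n : nat => ult_lt U u (ult_const (u n)) in
  ((U B /\ ~ U A /\ ~ U C) \/ (U A /\ ~ U B /\ ~ U C) \/ (U C /\ ~ U A /\ ~ U B))
  /\ (U B -> has_const_subseq u)
  /\ (U A -> has_incr_subseq u)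
  /\ (U C -> has_decr_subseq u).
Proof.
move=> A B C.
have trichotomy n : exactly_one3 (A n) (B n) (C n).
  by apply: (ultraF_exactly_one3 hU.1) => m; exact: lt_eq_gt_exactly_one3.
split; first by move: (ultraF_exactly_one3 hU.1 trichotomy); rewrite /exactly_one3; tauto.
split.
  move=> UB; have [phi [phi_incr const]] :=
    free_ultraF_chain_subseq hU (fun y x z => @etrans F x y z) UB.
  exists phi; split => // i j; case: (ltngtP i j) => [/const|/const ->|->] //.
split; first exact: free_ultraF_chain_subseq hU lt_trans.
exact: free_ultraF_chain_subseq hU (fun y x z yx zy => lt_trans zy yx).
Qed.
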